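(* For every integer $n\ge 53$, $5^n$ is selfcondensable.
   Context: For a finite nonempty multiset $S$ of real numbers, $V(S)$ is the smallest set of real numbers such that: (1) if $|S|=1$ then $S\subseteq V(S)$; (2) if $|S|\ge 2$, then for all nonempty multisets $A,B$ with $A+B=S$ (multiplicities add) and all $a\in V(A)$, $b\in V(B)$, each of $a+b,\ a-b,\ b-a,\ ab,\ a/b,\ b/a,\ a^b,\ b^a$ lies in $V(S)$ whenever it is a well-defined real number; (3) if $a\in V(S)$ is a nonnegative integer then $a!\in V(S)$ (with $0!=1$). A positive integer $N$ is selfcondensable if $N\in V(S_N)$, where $S_N$ is the multiset of the digits of the decimal representation of $N$ (each digit counted with its multiplicity). *)

From Stdlib Require Import Reals Lra Lia ZArith Arith List Permutation.
Import ListNotations.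
Open Scope R_scope.

Definition rpow_rel (a b r : R) : Prop :=
  (0 < a /\ r = Rpower a b) \/
  (a = 0 /\ 0 < b /\ r = 0) \/
  (a < 0 /\ exists z : Z, b = IZR z /\ r = powerRZ a z).

Definition combine (a b r : R) : Prop :=
  r = a + b \/ r = a - b \/ r = b - a \/ r = a * b \/
  (b <> 0 /\ r = a / b) \/ (a <> 0 /\ r = b / a) \/
  rpow_rel a b r \/ rpow_rel b a r.

(* V S r : r ∈ V(S); multisets are lists up to permutation. *)
Inductive V : list R -> R -> Prop :=
| V_single : forall x, V [x] x
| V_op : forall (S A B : list R) (a b r : R),
    Permutation S (A ++ B) -> A <> [] -> B <> [] ->
    V A a -> V B b -> combine a b r -> V S r
| V_fact : forall (S : list R) (k : nat), V S (INR k) -> V S (INR (fact k)).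

(* decimal digits (least significant first) *)
Fixpoint digits_aux (fuel n : nat) : list nat :=
  match fuel with
  | O => []
  | S f => if Nat.ltb n 10 then [n] else (n mod 10)%nat :: digits_aux f (n / 10)
  end.

Definition digits (n : nat) : list nat := digits_aux n n.

Definition selfcondensable (N : nat) : Prop :=
  (0 < N)%nat /\ V (map INR (digits N)) (INR N).

(** The last digit of [5^n] is [5], so it suffices to build [n] from the
    remaining digits and raise [5] to it.  Each remaining digit [0] or [1],
    and each pair of equal digits [d, d] with [d <> 0], evaluates to [1] (as [0!], [1], [d/d]);
    at most eight digits, pairwise distinct and [>= 2], are left unpaired, and
    they are swallowed by one of the ones through [1^x = 1].  Since [5^n] has
    more than [2 n/3] digits, this yields about [n/3] ones, and binary
    expansion ([2m = (1+1) m], [2m+1 = (1+1) m + 1]) builds [n] from about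
    [3 log2 n] ones, which is few enough once [n >= 53]. *)

From Pilot Require Import Defs.
From Stdlib Require Import Reals Arith List Permutation.
From Stdlib Require Import Lra Lia ZifyNat.
Import ListNotations.

Lemma V_nonempty (L : list R) (r : R) : V L r -> L <> [].
Proof.
  induction 1 as [x| S A B a b r HS HA HB _ _ _ _ _|]; try discriminate; auto.
  intros ->. apply Permutation_nil in HS. now destruct A.
Qed.

Lemma V_perm (L L' : list R) (r : R) : V L r -> Permutation L L' -> V L' r.
Proof.
  intros HV; revert L'; induction HV as [x| S A B a b r HS HA HB HVA _ HVB _ Hc| S k _ IH];
    intros L' HP.
  - apply Permutation_length_1_inv in HP as ->. constructor.
  - apply (V_op L' A B a b r); auto.
    now apply (Permutation_trans (Permutation_sym HP)).
  - now apply V_fact, IH.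
Qed.

Lemma V_combine (A B : list R) (a b r : R) :
  V A a -> V B b -> Defs.combine a b r -> V (A ++ B) r.
Proof. intros HA HB; apply (V_op _ A B a b); eauto using V_nonempty. Qed.

Lemma V_add (A B : list R) (a b : R) : V A a -> V B b -> V (A ++ B) (a + b).
Proof. intros HA HB; apply (V_combine A B a b); auto. now left. Qed.

Lemma V_mul (A B : list R) (a b : R) : V A a -> V B b -> V (A ++ B) (a * b).
Proof. intros HA HB; apply (V_combine A B a b); auto. now do 3 right; left. Qed.

Lemma V_Rpower (A B : list R) (a b : R) :
  0 < a -> V A a -> V B b -> V (A ++ B) (Rpower a b).
Proof. intros Ha HA HB; apply (V_combine A B a b); auto. now do 6 right; left; left. Qed.

Lemma V_exists (L : list R) : L <> [] -> exists x, V L x.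
Proof.
  induction L as [|a [|b L] IH]; intros HL; [congruence| now exists a; constructor|].
  destruct IH as [x Hx]; [discriminate|].
  exists (a + x). apply (V_add [a]); [constructor | exact Hx].
Qed.

Lemma V_self_div (x : R) : x <> 0 -> V [x; x] 1.
Proof.
  intros Hx. replace 1 with (x / x) by now field.
  apply (V_combine [x] [x] x x); [constructor|constructor|]. now do 4 right; left.
Qed.

Lemma V_absorb_one (B L : list R) : V B 1 -> V (B ++ L) 1.
Proof.
  intros HB. destruct L as [|a L]; [now rewrite app_nil_r|].
  destruct (V_exists (a :: L)) as [x Hx]; [discriminate|].
  replace 1 with (Rpower 1 x) by (unfold Rpower; now rewrite ln_1, Rmult_0_r, exp_0).
  apply V_Rpower; auto; lra.
Qed.

(* [3 = 1 + (1 + 1)] is cheaper than [(1 + 1) * 1 + 1]; the saving is needed at [n = 53]. *)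
Fixpoint ones_cost (p : positive) : nat :=
  match p with
  | xH => 1
  | xI xH => 3
  | xO q => ones_cost q + 2
  | xI q => ones_cost q + 3
  end.

Lemma ones_cost_xI (q : positive) : q <> xH -> ones_cost (xI q) = (ones_cost q + 3)%nat.
Proof. now destruct q. Qed.

Lemma V_ones (p : positive) (Bs : list (list R)) :
  Forall (fun B => V B 1) Bs -> (ones_cost p <= length Bs)%nat ->
  V (concat Bs) (INR (Pos.to_nat p)).
Proof.
  revert Bs; induction p as [q IH|q IH|]; intros Bs Hones Hlen.
  - destruct (Pos.eq_dec q xH) as [->|Hq].
    + destruct Bs as [|B1 [|B2 [|B3 Bs]]]; cbn in Hlen; try lia.
      apply Forall_cons_iff in Hones as [H1 [H2 [H3 _]%Forall_cons_iff]%Forall_cons_iff].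
      change (Pos.to_nat 3) with 3%nat; replace (INR 3) with (1 + (1 + 1)) by (cbn; ring).
      apply V_add; [exact H1|]. apply V_add; [exact H2|]. now apply V_absorb_one.
    + rewrite ones_cost_xI in Hlen by exact Hq.
      destruct Bs as [|B1 [|B2 [|B3 Bs]]]; cbn in Hlen; try lia.
      apply Forall_cons_iff in Hones as [H1 [H2 [H3 Hones]%Forall_cons_iff]%Forall_cons_iff].
      rewrite Pos2Nat.inj_xI, S_INR, mult_INR.
      apply (V_perm (((B1 ++ B2) ++ concat Bs) ++ B3)).
      * apply V_add; [apply V_mul; [apply V_add|apply IH]|]; auto; lia.
      * cbn. rewrite <- !app_assoc.
        now apply Permutation_app_head, Permutation_app_head, Permutation_app_comm.
  - destruct Bs as [|B1 [|B2 Bs]]; cbn in Hlen; try lia.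
    apply Forall_cons_iff in Hones as [H1 [H2 Hones]%Forall_cons_iff].
    cbn [concat]; rewrite Pos2Nat.inj_xO, mult_INR, app_assoc.
    apply V_mul; [apply V_add|apply IH]; auto; lia.
  - destruct Bs as [|B1 Bs]; cbn in Hlen; [lia|].
    apply V_absorb_one. now apply Forall_cons_iff in Hones as [H1 _].
Qed.

Lemma ones_cost_xI_le (q : positive) : (ones_cost (xI q) <= ones_cost q + 3)%nat.
Proof. destruct q; cbn; lia. Qed.

Lemma ones_cost_le_quarter (p : positive) :
  (56 <= Pos.to_nat p -> ones_cost p <= Pos.to_nat p / 4)%nat.
Proof.
  assert (Htable : forall q, (56 <= Pos.to_nat q < 112 -> ones_cost q <= Pos.to_nat q / 4)%nat).
  { assert (Hcheck : forallb (fun n => ones_cost (Pos.of_nat n) <=? n / 4) (seq 56 56) = true)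
      by now vm_compute.
    intros q Hq. rewrite forallb_forall in Hcheck.
    rewrite <- (Pos2Nat.id q) at 1. apply Nat.leb_le, Hcheck, in_seq. lia. }
  induction p as [q IH|q IH|]; intros Hp.
  - destruct (Nat.lt_ge_cases (Pos.to_nat (xI q)) 112); [now apply Htable|].
    pose proof (ones_cost_xI_le q). rewrite Pos2Nat.inj_xI in *.
    specialize (IH ltac:(lia)). lia.
  - destruct (Nat.lt_ge_cases (Pos.to_nat (xO q)) 112); [now apply Htable|].
    cbn [ones_cost]. rewrite Pos2Nat.inj_xO in *.
    specialize (IH ltac:(lia)). lia.
  - cbn in Hp; lia.
Qed.

(* [2 (n/3)] digits, of which at most eight stay unpaired, give [n/3 - 4] ones. *)
Lemma ones_cost_fits (n : nat) :
  (53 <= n -> 2 * ones_cost (Pos.of_nat n) + 7 <= 2 * (n / 3))%nat.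
Proof.
  intros Hn. destruct (Nat.lt_ge_cases n 56) as [Hsmall|Hbig].
  - assert (n = 53 \/ n = 54 \/ n = 55)%nat as [-> | [-> | ->]] by lia;
      now apply Nat.leb_le.
  - pose proof (ones_cost_le_quarter (Pos.of_nat n)) as Hq.
    rewrite Nat2Pos.id in Hq by lia. specialize (Hq Hbig). lia.
Qed.

Lemma digits_aux_lt_10 (fuel n : nat) : Forall (fun d => d < 10)%nat (digits_aux fuel n).
Proof.
  revert n; induction fuel as [|fuel IH]; intros n; cbn [digits_aux]; [constructor|].
  destruct (Nat.ltb_spec n 10); constructor; auto. apply Nat.mod_upper_bound; lia.
Qed.

Lemma digits_aux_length (fuel n j : nat) :
  (n <= fuel -> 10 ^ j <= n -> j < length (digits_aux fuel n))%nat.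
Proof.
  revert n j; induction fuel as [|fuel IH]; intros n j Hfuel Hj.
  - pose proof (Nat.pow_nonzero 10 j). lia.
  - cbn [digits_aux]. destruct (Nat.ltb_spec n 10), j as [|j]; cbn [length]; try lia.
    + rewrite Nat.pow_succ_r' in Hj. pose proof (Nat.pow_nonzero 10 j). lia.
    + rewrite Nat.pow_succ_r' in Hj. apply -> Nat.succ_lt_mono. apply IH; lia.
Qed.

Lemma digits_split_last (N j : nat) : (1 <= j -> 10 ^ j <= N ->
  exists t, digits N = N mod 10 :: t /\ Forall (fun d => d < 10) t /\ j <= length t)%nat.
Proof.
  intros Hj HN.
  assert (H10 : (10 <= N)%nat).
  { enough (10 ^ 1 <= 10 ^ j)%nat by lia. apply Nat.pow_le_mono_r; lia. }
  pose proof (digits_aux_length N N j (le_n N) HN) as Hlen.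
  unfold digits in *. destruct N as [|M]; [lia|]. cbn [digits_aux] in Hlen |- *.
  destruct (Nat.ltb_spec (S M) 10); [lia|].
  eexists; repeat split; [apply digits_aux_lt_10 | cbn [length] in Hlen; lia].
Qed.

Lemma V_digit_unit (d : nat) : (d <= 1)%nat -> V [INR d] 1.
Proof.
  intros Hd. destruct d as [|[|d]]; [|constructor|lia].
  change (V [INR 0] (INR (fact 0))). apply V_fact. constructor.
Qed.

Lemma digits_pair_up (l : list nat) : Forall (fun d => d < 10)%nat l ->
  exists Bs lo, Permutation l (concat Bs ++ lo) /\
    Forall (fun B => V (map INR B) 1) Bs /\
    NoDup lo /\ Forall (fun d => 2 <= d < 10)%nat lo /\
    (length l <= 2 * length Bs + length lo)%nat.
Proof.
  induction l as [|x l IH]; intros Hl.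
  { exists [], []. repeat split; constructor. }
  apply Forall_cons_iff in Hl as [Hx Hl].
  destruct (IH Hl) as (Bs & lo & Hperm & Hunits & Hnodup & Hlo & Hlen).
  destruct (Nat.le_gt_cases x 1) as [Hx1|Hx2].
  { exists ([x] :: Bs), lo. split; [|split; [|split; [|split]]]; auto.
    - now apply perm_skip.
    - constructor; auto. now apply V_digit_unit.
    - cbn [length]. lia. }
  destruct (in_dec Nat.eq_dec x lo) as [Hin|Hnin].
  - apply in_split in Hin as (lo1 & lo2 & ->).
    exists ([x; x] :: Bs), (lo1 ++ lo2). split; [|split; [|split; [|split]]].
    + cbn. apply perm_skip. rewrite Hperm, !app_assoc.
      apply Permutation_sym, Permutation_middle.
    + constructor; auto. apply V_self_div, not_0_INR. lia.
    + now apply NoDup_remove_1 with x.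
    + apply Forall_app in Hlo as [Hlo1 Hlo2%Forall_cons_iff].
      apply Forall_app; tauto.
    + rewrite length_app in *. cbn [length] in *. lia.
  - exists Bs, (x :: lo). split; [|split; [|split; [|split]]].
    + rewrite Hperm. apply Permutation_middle.
    + exact Hunits.
    + now constructor.
    + constructor; auto; lia.
    + cbn [length]. lia.
Qed.

Lemma length_nodup_digits_ge_2 (lo : list nat) :
  NoDup lo -> Forall (fun d => 2 <= d < 10)%nat lo -> (length lo <= 8)%nat.
Proof.
  intros Hnodup Hlo. change 8%nat with (length (seq 2 8)).
  apply NoDup_incl_length; auto.
  intros d Hd. rewrite Forall_forall in Hlo. apply in_seq. specialize (Hlo d Hd). lia.
Qed.

Lemma digits_partition_into_units (l : list nat) :
  Forall (fun d => d < 10)%nat l -> (9 <= length l)%nat ->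
  exists Bs, Permutation l (concat Bs) /\ Forall (fun B => V (map INR B) 1) Bs /\
    (length l <= 2 * length Bs + 8)%nat.
Proof.
  intros Hl Hlen.
  destruct (digits_pair_up l Hl) as (Bs & lo & Hperm & Hunits & Hnodup & Hlo & Hlen').
  pose proof (length_nodup_digits_ge_2 lo Hnodup Hlo).
  destruct Bs as [|B0 Bs]; [cbn in Hlen'; lia|].
  apply Forall_cons_iff in Hunits as [HB0 Hunits].
  exists ((B0 ++ lo) :: Bs). repeat split.
  - rewrite Hperm. cbn. rewrite <- !app_assoc.
    now apply Permutation_app_head, Permutation_app_comm.
  - constructor; auto. rewrite map_app. now apply V_absorb_one.
  - cbn [length] in *. lia.
Qed.

Lemma pow5_mod_10 (n : nat) : (1 <= n -> 5 ^ n mod 10 = 5)%nat.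
Proof.
  induction n as [|[|n] IH]; intros Hn; [lia|reflexivity|].
  rewrite Nat.pow_succ_r', Nat.Div0.mul_mod, IH by lia. reflexivity.
Qed.

(* 10^2 = 100 <= 125 = 5^3 *)
Lemma pow10_le_pow5 (n : nat) : (10 ^ (2 * (n / 3)) <= 5 ^ n)%nat.
Proof.
  transitivity (5 ^ (3 * (n / 3)))%nat.
  - rewrite !Nat.pow_mul_r. apply Nat.pow_le_mono_l. cbn; lia.
  - apply Nat.pow_le_mono_r; lia.
Qed.

Theorem lemma7p2 : forall n : nat, (53 <= n)%nat -> selfcondensable (5 ^ n).
Proof.
  intros n Hn. split; [apply Nat.neq_0_lt_0, Nat.pow_nonzero; lia|].
  destruct (digits_split_last (5 ^ n) (2 * (n / 3))) as (t & Hdigits & Ht & Hlen_t);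
    [lia | apply pow10_le_pow5 |].
  rewrite pow5_mod_10 in Hdigits by lia.
  destruct (digits_partition_into_units t Ht) as (Bs & Hperm & Hunits & Hlen_Bs); [lia|].
  pose proof (ones_cost_fits n Hn) as Hfits.
  rewrite Hdigits. apply (V_perm ([INR 5] ++ concat (map (map INR) Bs))).
  - rewrite pow_INR, <- Rpower_pow by (cbn; lra).
    apply V_Rpower; [cbn; lra | constructor |].
    rewrite <- (Nat2Pos.id n) by lia.
    apply V_ones; [now apply Forall_map | rewrite length_map; lia].
  - cbn. apply perm_skip. rewrite <- concat_map.
    now apply Permutation_map, Permutation_sym.
Qed.
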